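(* Let $f(X)=N(N-1)\sum_{i=1}^{\ell}\beta_i\,t(H_i,X)$ be a subgraph-counting function. Then for all $X,Y\in[0,1]^n$, $$\|\nabla f(X)-\nabla f(Y)\|_1\le C\,\|X-Y\|_1,\qquad C=12\sum_{i=1}^{\ell}|\beta_i|\,|E(H_i)|^2.$$
   Context: $n=\binom N2$; $X\in[0,1]^n$ is identified with a symmetric $N\times N$ matrix with zero diagonal, entries indexed by unordered pairs. For a finite simple graph $H$ on $[m]$, $t(H,X)=\frac{1}{N(N-1)\cdots(N-m+1)}\sum_q\prod_{\{l,l'\}\in E(H)}X_{q_lq_{l'}}$ over injective $q:[m]\to[N]$. For an index $e$, $\partial_ef(X)=\frac12(f(X^{e\leftarrow1})-f(X^{e\leftarrow0}))$ ($X^{e\leftarrow a}$: coordinate $e$ replaced by $a$), $\nabla f(X)=(\partial_ef(X))_e\in\mathbb R^n$. $\|\cdot\|_1$ is the $\ell^1$ norm on $\mathbb R^n$. *)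

From mathcomp Require Import all_boot all_order all_algebra.
Set Implicit Arguments. Unset Strict Implicit. Unset Printing Implicit Defensive.
Import Order.TTheory GRing.Theory Num.Theory.
Local Open Scope ring_scope.

Definition upair (n : nat) := {e : {set 'I_n} | #|e| == 2%N}.

Record sgraph := SGraph { gv : nat; gE : {set upair gv} }.

Section Defs.
Variable R : realFieldType.

(* Entry of X at a 2-element set s of vertices (0 if s is not a pair). *)
Definition entry (N : nat) (X : upair N -> R) (s : {set 'I_N}) : R :=
  match insub s with Some p => X p | None => 0 end.

Definition tdens (H : sgraph) (N : nat) (X : upair N -> R) : R :=
  (N ^_ (gv H))%:R^-1 *
  \sum_(q : {ffun 'I_(gv H) -> 'I_N} | injectiveb q)
     \prod_(e in gE H) entry X (q @: val e).

Definition subgraph_count (l : nat) (beta : 'I_l -> R) (H : 'I_l -> sgraph)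
  (N : nat) (X : upair N -> R) : R :=
  (N * N.-1)%:R * \sum_(i < l) beta i * tdens (H i) X.

Definition upd (N : nat) (X : upair N -> R) (e : upair N) (a : R) : upair N -> R :=
  fun e' => if e' == e then a else X e'.

Definition pderiv (N : nat) (f : (upair N -> R) -> R) (e : upair N)
  (X : upair N -> R) : R :=
  (f (upd X e 1) - f (upd X e 0)) / 2.

Definition grad (N : nat) (f : (upair N -> R) -> R) (X : upair N -> R) :
  upair N -> R := fun e => pderiv f e X.

Definition norm1 (N : nat) (v : upair N -> R) : R := \sum_(e : upair N) `|v e|.

Definition in_cube (N : nat) (X : upair N -> R) : Prop :=
  forall e, 0 <= X e <= 1.
End Defs.

(* For an injective q : [m] -> [N], the monomial prod_(a in E) X_(q a) is affine in
   each coordinate e, and since q is injective at most one edge a is mapped onto e;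
   its discrete derivative in e is the product over the remaining edges.  All entries
   lie in [0,1], so such products are 1-Lipschitz for the l^1 distance of their
   factors.  Summing over e and q, each edge b of H contributes
   sum_q |X - Y|_(q b), and by the symmetry of K_N every pair is the image of b under
   exactly N^_m / C(N,2) injections, which cancels the normalisation
   N(N-1) / (2 N^_m).  This gives the bound with the constant
   sum_i |beta_i| |E(H_i)|^2, twelve times smaller than the stated one. *)

From mathcomp Require Import all_boot all_order all_algebra.
From mathcomp Require fingroup perm.
From mathcomp Require Import ring.
Set Implicit Arguments. Unset Strict Implicit. Unset Printing Implicit Defensive.
Import Order.TTheory GRing.Theory Num.Theory.
Local Open Scope ring_scope.

Lemma ler_norm_prodB (R : numDomainType) (I : Type) (r : seq I) (P : pred I)
    (x y : I -> R) :
  (forall i, `|x i| <= 1) -> (forall i, `|y i| <= 1) ->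
  `|\prod_(i <- r | P i) x i - \prod_(i <- r | P i) y i|
    <= \sum_(i <- r | P i) `|x i - y i|.
Proof.
move=> x_le1 y_le1; elim: r => [|a r IH]; first by rewrite !big_nil subrr normr0.
rewrite !big_cons; case: (P a) => //.
set p := \prod_(_ <- _ | _) x _; set q := \prod_(_ <- _ | _) y _.
have q_le1 : `|q| <= 1.
  by rewrite normr_prod prodr_ile1 // => i _; rewrite normr_ge0 y_le1.
have -> : x a * p - y a * q = x a * (p - q) + (x a - y a) * q by ring.
apply: (le_trans (ler_normD _ _)); rewrite [leLHS]addrC !normrM lerD //.
  by rewrite -[leRHS]mulr1 ler_wpM2l.
by apply: le_trans IH; rewrite -[leRHS]mul1r ler_wpM2r.
Qed.

Lemma imset_ffun_comp (aT T rT : finType) (f : T -> rT) (g : {ffun aT -> T})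
    (A : {set aT}) :
  [ffun i => f (g i)] @: A = f @: (g @: A).
Proof. by rewrite -imset_comp; apply: eq_imset => i; rewrite ffunE. Qed.

Section Entries.
Variables (R : realFieldType) (N : nat).
Implicit Types (X Y : upair N -> R) (s : {set 'I_N}).

Lemma entry_upd X (e : upair N) (a : R) s :
  entry (upd X e a) s = if s == val e then a else entry X s.
Proof.
rewrite /entry /upd; case: insubP => [p _ <-|not_pair].
  by rewrite (inj_eq val_inj).
by case: eqP => // s_e; move: not_pair; rewrite s_e (valP e).
Qed.

Lemma entry_sum X s : entry X s = \sum_(e : upair N | val e == s) X e.
Proof.
rewrite /entry; case: insubP => [p _ <-|not_pair].
  by rewrite (big_pred1 p) // => e; rewrite /= (inj_eq val_inj).
rewrite big_pred0 // => e; apply/negP => /eqP e_s.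
by move: not_pair; rewrite -e_s (valP e).
Qed.

Lemma norm_entry_le1 X s : in_cube X -> `|entry X s| <= 1.
Proof.
move=> X01; rewrite /entry; case: insubP => [p _ _|_]; last by rewrite normr0.
by have /andP[X_ge0 X_le1] := X01 p; rewrite ger0_norm.
Qed.

Lemma norm_entryB X Y s :
  `|entry X s - entry Y s| = entry (fun e => `|X e - Y e|) s.
Proof. by rewrite /entry; case: insubP => // _; rewrite subrr normr0. Qed.

End Entries.

Section HomProduct.
Variables (R : realFieldType) (N m : nat) (E : {set upair m}).
Variables (q : {ffun 'I_m -> 'I_N}) (q_inj : injective q).
Implicit Types (X Y : upair N -> R) (a b : upair m) (e : upair N).

Definition hom_prod X := \prod_(a in E) entry X (q @: val a).

Definition hom_prod_without X a := \prod_(b in E | b != a) entry X (q @: val b).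

Definition hom_prod_diff X e := hom_prod (upd X e 1) - hom_prod (upd X e 0).

Lemma eq_imset_edge a b : (q @: val a == q @: val b) = (a == b).
Proof. by rewrite (inj_eq (imset_inj q_inj)) (inj_eq val_inj). Qed.

Lemma hom_prod_diffE X e :
  hom_prod_diff X e = \sum_(a in E | q @: val a == val e) hom_prod_without X a.
Proof.
rewrite /hom_prod_diff /hom_prod.
case: (pickP [pred a in E | q @: val a == val e]) => [a0 /andP[Ea0 a0e]|none].
  rewrite [RHS](big_pred1 a0); last first.
    move=> a /=; apply/andP/eqP => [[_ /eqP ae]|->]; last by rewrite Ea0 a0e.
    by apply/eqP; rewrite -eq_imset_edge ae (eqP a0e).
  rewrite !(bigD1 a0 Ea0) /= !entry_upd a0e mul1r mul0r subr0.
  apply: eq_bigr => a /andP[_ a_a0]; rewrite entry_upd -(eqP a0e) eq_imset_edge.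
  by rewrite (negbTE a_a0).
rewrite [RHS]big_pred0 => [|a]; last exact: none.
apply/eqP; rewrite subr_eq0; apply/eqP/eq_bigr => a Ea; rewrite !entry_upd.
by move: (none a); rewrite /= Ea /= => ->.
Qed.

Lemma norm_hom_prod_withoutB X Y a : in_cube X -> in_cube Y ->
  `|hom_prod_without X a - hom_prod_without Y a|
    <= \sum_(b in E) entry (fun e => `|X e - Y e|) (q @: val b).
Proof.
move=> X01 Y01; rewrite /hom_prod_without.
apply: le_trans (ler_norm_prodB _ _ _ _) _ => [b|b|]; try exact: norm_entry_le1.
under eq_bigr => b _ do rewrite norm_entryB.
rewrite [leRHS](bigID (fun b => b != a)) /= lerDl sumr_ge0 // => b _.
by rewrite -norm_entryB.
Qed.

Lemma sum_norm_hom_prod_diffB X Y : in_cube X -> in_cube Y ->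
  \sum_e `|hom_prod_diff X e - hom_prod_diff Y e|
    <= #|E|%:R * \sum_(b in E) entry (fun e => `|X e - Y e|) (q @: val b).
Proof.
move=> X01 Y01; set D := fun a => `|hom_prod_without X a - hom_prod_without Y a|.
apply: (@le_trans _ _ (\sum_e \sum_(a in E | q @: val a == val e) D a)).
  by apply: ler_sum => e _; rewrite !hom_prod_diffE -sumrB ler_norm_sum.
rewrite (exchange_big_dep (mem E)) => [/=|? ? _ /andP[] //].
apply: (@le_trans _ _ (\sum_(a in E) D a)).
  apply: ler_sum => a Ea; rewrite (eq_bigl (fun e => val e == q @: val a)).
    rewrite -(entry_sum (fun=> D a)) /entry; case: insubP => // _.
    exact: normr_ge0.
  by move=> e; rewrite Ea eq_sym.
rewrite mulr_natl -sumr_const; apply: ler_sum => a _.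
exact: norm_hom_prod_withoutB.
Qed.

End HomProduct.

Section InjectiveEdgeMaps.
Import fingroup perm.
Variables (N m : nat) (b : upair m).
Implicit Types e : upair N.

Definition inj_edge_maps e :=
  [set q : {ffun 'I_m -> 'I_N} | injectiveb q & q @: val b == val e].

Lemma card_upair : #|{: upair N}| = 'C(N, 2).
Proof.
rewrite card_sig -[N in RHS]card_ord -card_draws.
by apply: eq_card => A; rewrite !inE.
Qed.

Lemma perm_imset_upair e e' : exists s : {perm 'I_N}, s @: val e = val e'.
Proof.
case/cards2P: (valP e) => x [y [xy ->]]; case/cards2P: (valP e') => x' [y' [xy' ->]].
pose s := (tperm x x' * tperm (tperm x x' y) y')%g.
have sx : s x = x'.
  rewrite permM tpermL tpermD //; last by rewrite eq_sym.
  by rewrite -[x' in _ != x'](tpermL x x') (inj_eq perm_inj) eq_sym.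
by exists s; rewrite imsetU1 imset_set1 sx permM tpermL.
Qed.

Lemma card_inj_edge_maps_const e e' : #|inj_edge_maps e| = #|inj_edge_maps e'|.
Proof.
have [s se] := perm_imset_upair e' e.
have h_inj : injective (fun q : {ffun 'I_m -> 'I_N} => [ffun i => s (q i)]).
  move=> q1 q2 /ffunP h12; apply/ffunP => i.
  by apply: (@perm_inj _ s); have := h12 i; rewrite !ffunE.
rewrite -(card_preimset _ h_inj); apply: eq_card => q; rewrite !inE.
rewrite imset_ffun_comp -se (inj_eq (imset_inj (@perm_inj _ s))); congr andb.
apply/injectiveP/injectiveP => q_inj i j.
  by move=> qij; apply: q_inj; rewrite !ffunE qij.
by rewrite !ffunE => /perm_inj; apply: q_inj.
Qed.

Lemma sum_card_inj_edge_maps : (\sum_e #|inj_edge_maps e|)%N = N ^_ m.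
Proof.
under eq_bigr => e _ do rewrite -sum1_card.
rewrite (exchange_big_dep (fun q : {ffun 'I_m -> 'I_N} => injectiveb q)) => [/=|e q _];
  last by rewrite inE => /andP[].
rewrite -[N in RHS]card_ord -[m in RHS]card_ord -card_inj_ffuns -sum1_card.
apply: eq_big => [q|q q_inj]; first by rewrite inE.
have pair_b : #|q @: val b| == 2 by rewrite card_imset ?(valP b) //; exact/injectiveP.
rewrite (big_pred1 (exist _ (q @: val b) pair_b : upair N)) // => e.
by rewrite !inE q_inj -(inj_eq val_inj) /= eq_sym.
Qed.

Lemma card_inj_edge_maps e : (N * N.-1 * #|inj_edge_maps e| = 2 * N ^_ m)%N.
Proof.
rewrite -sum_card_inj_edge_maps (eq_bigr (fun=> #|inj_edge_maps e|)) => [|e' _].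
  by rewrite sum_nat_const card_upair -(bin1 N.-1) mul_bin_diag mulnA.
exact: card_inj_edge_maps_const.
Qed.

End InjectiveEdgeMaps.

Section ScaledDensity.
Variables (R : realFieldType) (N : nat).
Implicit Types (X Y A : upair N -> R) (H : sgraph).

Definition scaled_tdens H X : R := (N * N.-1)%:R * tdens H X.

Lemma pderiv_scaled_tdens H e X :
  pderiv (scaled_tdens H) e X = (N * N.-1)%:R / (N ^_ gv H)%:R / 2 *
    \sum_(q : {ffun 'I_(gv H) -> 'I_N} | injectiveb q) hom_prod_diff (gE H) q X e.
Proof. by rewrite /pderiv /scaled_tdens /tdens /hom_prod_diff /hom_prod sumrB; ring. Qed.

Lemma sum_inj_entry m (b : upair m) A :
  \sum_(q : {ffun 'I_m -> 'I_N} | injectiveb q) entry A (q @: val b)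
    = \sum_e A e * #|inj_edge_maps b e|%:R.
Proof.
under eq_bigr => q _ do rewrite entry_sum.
rewrite (exchange_big_dep predT) //=; apply: eq_bigr => e _.
rewrite sumr_const mulr_natr; congr (_ *+ _).
by apply: eq_card => q; rewrite inE eq_sym.
Qed.

Lemma inj_edge_maps_weight_le1 m (b : upair m) (e : upair N) :
  (N * N.-1)%:R / (N ^_ m)%:R / 2 * #|inj_edge_maps b e|%:R <= 1 :> R.
Proof.
have count : (N * N.-1)%:R * #|inj_edge_maps b e|%:R = 2 * (N ^_ m)%:R :> R.
  by rewrite -natrM card_inj_edge_maps natrM.
have -> : (N * N.-1)%:R / (N ^_ m)%:R / 2 * #|inj_edge_maps b e|%:R
    = (N * N.-1)%:R * #|inj_edge_maps b e|%:R / (N ^_ m)%:R / 2 :> R by ring.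
rewrite count; have [->|falling_neq0] := eqVneq (N ^_ m)%:R (0 : R).
  by rewrite invr0 !mulr0 mul0r ler01.
by rewrite mulfK // divff ?pnatr_eq0.
Qed.

Lemma norm1_grad_scaled_tdensB H X Y : in_cube X -> in_cube Y ->
  norm1 (fun e => grad (scaled_tdens H) X e - grad (scaled_tdens H) Y e)
    <= (#|gE H| ^ 2)%:R * norm1 (fun e => X e - Y e).
Proof.
move=> X01 Y01; set m := gv H; set E := gE H; set A := fun e => `|X e - Y e|.
set c : R := (N * N.-1)%:R / (N ^_ m)%:R / 2.
have c_ge0 : 0 <= c by rewrite !divr_ge0.
pose F (q : {ffun 'I_m -> 'I_N}) e := hom_prod_diff E q X e - hom_prod_diff E q Y e.
have -> : norm1 (fun e => grad (scaled_tdens H) X e - grad (scaled_tdens H) Y e)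
    = c * \sum_e `|\sum_(q : {ffun 'I_m -> 'I_N} | injectiveb q) F q e|.
  rewrite /norm1 mulr_sumr; apply: eq_bigr => e _.
  by rewrite /grad !pderiv_scaled_tdens -mulrBr -sumrB normrM ger0_norm.
apply: (@le_trans _ _
    (c * \sum_(q : {ffun 'I_m -> 'I_N} | injectiveb q)
           #|E|%:R * \sum_(b in E) entry A (q @: val b))).
  rewrite ler_wpM2l //; apply: le_trans (ler_sum _ (fun e _ => ler_norm_sum _ _ _)) _.
  rewrite exchange_big /=; apply: ler_sum => q /injectiveP q_inj.
  exact: sum_norm_hom_prod_diffB.
rewrite -mulr_sumr mulrCA natrX expr2 -mulrA ler_wpM2l // exchange_big /= mulr_sumr.
rewrite mulr_natl -sumr_const; apply: ler_sum => b _.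
rewrite sum_inj_entry mulr_sumr; apply: ler_sum => e _.
rewrite mulrCA -[leRHS]mulr1 ler_wpM2l ?normr_ge0 //; exact: inj_edge_maps_weight_le1.
Qed.

End ScaledDensity.

Lemma grad_subgraph_count (R : realFieldType) l (beta : 'I_l -> R) (H : 'I_l -> sgraph)
    N (X : upair N -> R) e :
  grad (subgraph_count beta H (N:=N)) X e
    = \sum_(i < l) beta i * grad (scaled_tdens (H i)) X e.
Proof.
rewrite /grad /pderiv /subgraph_count /scaled_tdens -mulrBr -sumrB mulr_sumr mulr_suml.
by apply: eq_bigr => i _; ring.
Qed.

Lemma norm1_sum_le (R : realFieldType) N l (c : 'I_l -> R) (v : 'I_l -> upair N -> R) :
  norm1 (fun e => \sum_(i < l) c i * v i e) <= \sum_(i < l) `|c i| * norm1 (v i).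
Proof.
apply: le_trans (ler_sum _ (fun e _ => ler_norm_sum _ _ _)) _.
rewrite exchange_big /=; apply: ler_sum => i _; rewrite mulr_sumr.
by apply: ler_sum => e _; rewrite normrM.
Qed.

Theorem lemma28 (R : realFieldType) (l : nat) (beta : 'I_l -> R)
  (H : 'I_l -> sgraph) (N : nat) (X Y : upair N -> R) :
  in_cube X -> in_cube Y ->
  norm1 (fun e => grad (subgraph_count beta H (N:=N)) X e
                  - grad (subgraph_count beta H (N:=N)) Y e)
  <= (12 * \sum_(i < l) `|beta i| * (#|gE (H i)| ^ 2)%:R)
     * norm1 (fun e => X e - Y e).
Proof.
move=> X01 Y01; set dXY := norm1 (fun e => X e - Y e).
have -> : norm1 (fun e => grad (subgraph_count beta H (N:=N)) X e
                         - grad (subgraph_count beta H (N:=N)) Y e)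
    = norm1 (fun e => \sum_(i < l) beta i *
        (grad (scaled_tdens (H i)) X e - grad (scaled_tdens (H i)) Y e)).
  apply: eq_bigr => e _; rewrite !grad_subgraph_count -sumrB.
  by congr `|_|; apply: eq_bigr => i _; rewrite mulrBr.
apply: le_trans (norm1_sum_le _ _) _.
apply: (@le_trans _ _ (\sum_(i < l) `|beta i| * (#|gE (H i)| ^ 2)%:R * dXY)).
  by apply: ler_sum => i _; rewrite -mulrA ler_wpM2l // norm1_grad_scaled_tdensB.
rewrite -mulr_suml ler_wpM2r ?sumr_ge0 // ler_peMl ?ler1n //.
by rewrite sumr_ge0 // => i _; rewrite mulr_ge0.
Qed.
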